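(* There exists a $(418,18)$-arc in $\operatorname{PG}(2,25)$; hence $m_{18}(2,25)\ge 418$.
   Context: Points of $\operatorname{PG}(2,q)$ are the 1-dimensional subspaces of $\operatorname{GF}(q)^3$, lines are the 2-dimensional subspaces. An $(n,r)$-arc in $\operatorname{PG}(2,q)$ is a set $\mathcal B$ of $n$ points such that every line contains at most $r$ points of $\mathcal B$ and at least one line contains exactly $r$ points of $\mathcal B$. $m_r(2,q)$ is the maximum $n$ for which an $(n,r)$-arc in $\operatorname{PG}(2,q)$ exists. *)

(* A subspace of F^3 is represented canonically by a square matrix X with
   <<X>>%MS = X (mxalgebra's canonical row-space representative); its
   dimension is \rank X. *)
From HB Require Import structures.
From mathcomp Require Import all_boot all_order all_algebra all_field.
Set Implicit Arguments. Unset Strict Implicit. Unset Printing Implicit Defensive.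
Import GRing.Theory.

Section PG2.
Variable F : finFieldType.

Definition is_subspace (X : 'M[F]_3) : bool := (<<X>>%MS == X).
Definition is_point (X : 'M[F]_3) : bool := is_subspace X && (\rank X == 1)%N.
Definition is_line (X : 'M[F]_3) : bool := is_subspace X && (\rank X == 2)%N.

Definition on_line (B : {set 'M[F]_3}) (L : 'M[F]_3) : nat :=
  #|[set P in B | (P <= L)%MS]|.

Definition is_arc (n r : nat) (B : {set 'M[F]_3}) : bool :=
  [&& [forall P in B, is_point P], #|B| == n,
      [forall L, is_line L ==> (on_line B L <= r)%N] &
      [exists L, is_line L && (on_line B L == r)]].

(* m_r(2,q): the maximum size of an (n,r)-arc (0 if none exists) *)
Definition m_r (r : nat) : nat :=
  \max_(B : {set 'M[F]_3} | is_arc #|B| r B) #|B|.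

End PG2.

From mathcomp Require Import all_boot all_order all_algebra all_field.
From mathcomp Require Import ring zify.
Set Implicit Arguments. Unset Strict Implicit. Unset Printing Implicit Defensive.
Import GRing.Theory.

(* GF(25) = GF(5)(w) with w^2 = 2, so the integer e < 25 can code the field
   element (e mod 5) + (e div 5) w, and field arithmetic on codes reduces to
   arithmetic on natural numbers modulo 5.  Every point and every line of
   PG(2,25) has a unique normalized coordinate vector (first nonzero entry 1),
   and a point lies on a line iff the dot product of these vectors vanishes.
   The arc is an explicit list of 418 normalized points; a computation over
   the 651 normalized lines shows that each of them meets the list in at most
   18 points and that one meets it in exactly 18. *)

Section Normalized.
Local Open Scope ring_scope.
Variables (F : fieldType) (n : nat).
Implicit Types u v c : 'rV[F]_n.

Definition normalized v : bool :=
  [exists k, (v 0 k == 1) && [forall j : 'I_n, (j < k)%N ==> (v 0 j == 0)]].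

Lemma normalized_neq0 v : normalized v -> v != 0.
Proof.
case/existsP => k /andP [vk1 _]; apply: contraTneq vk1 => ->.
by rewrite mxE eq_sym oner_eq0.
Qed.

Lemma normalized_sub_eq u v : normalized u -> normalized v -> (u <= v)%MS -> u = v.
Proof.
move=> /existsP [k /andP [/eqP uk1 /forallP u0]].
move=> /existsP [l /andP [/eqP vl1 /forallP v0]] /sub_rVP [a def_u].
have uE j : u 0 j = a * v 0 j by rewrite def_u mxE.
suff a1 : a = 1 by rewrite def_u a1 scale1r.
have [lt_kl | lt_lk | /val_inj eq_kl] := ltngtP k l.
- have /eqP vk0 : v 0 k == 0 by exact: implyP (v0 k) lt_kl.
  by move/eqP: uk1; rewrite uE vk0 mulr0 eq_sym oner_eq0.
- have /eqP : u 0 l == 0 by exact: implyP (u0 l) lt_lk.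
  rewrite uE vl1 mulr1 => a0.
  by move/eqP: uk1; rewrite uE a0 mul0r eq_sym oner_eq0.
- by rewrite -[a]mulr1 -[in a * 1]vl1 -uE -eq_kl.
Qed.

Lemma normalize_scale v : v != 0 -> exists2 a : F, a != 0 & normalized (a *: v).
Proof.
move=> nz_v.
have [k0 vk0] : exists k0, v 0 k0 != 0.
  apply/existsP; apply: contraR nz_v => /existsPn v0.
  by apply/eqP/rowP => j; rewrite mxE; apply/eqP/negPn/v0.
case: (@arg_minnP _ k0 (fun k => v 0 k != 0) val vk0) => k vk kmin.
exists (v 0 k)^-1; first by rewrite invr_eq0.
apply/existsP; exists k; rewrite mxE mulVf // eqxx /=.
apply/forallP => j; apply/implyP => lt_jk; rewrite mxE.
have /eqP -> : v 0 j == 0 by apply: contraLR lt_jk => /kmin; rewrite -leqNgt.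
by rewrite mulr0.
Qed.

Lemma sub_kernel_form m (L : 'M[F]_(m, n)) : (\rank L < n)%N ->
  exists2 c : 'rV[F]_n, c != 0 & forall v : 'rV_n, (v <= L)%MS -> v *m c^T = 0.
Proof.
move=> rkL; set C := cokermx L.
have [j nz_Cj | C0] := pickP (fun j => col j C != 0); last first.
  suff /(congr1 mxrank) : C = 0.
    by rewrite mxrank_coker mxrank0 => /eqP; rewrite subn_eq0 leqNgt rkL.
  by apply/matrixP => i j; have /negbFE/eqP/colP/(_ i) := C0 j; rewrite !mxE.
exists (col j C)^T; first by rewrite trmx_eq0.
move=> v; rewrite submxE trmxK colE mulmxA => /eqP ->.
by rewrite mul0mx.
Qed.

End Normalized.

Arguments normalized {F n}.

Section Arcs.
Local Open Scope ring_scope.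
Variable F : finFieldType.

Lemma genmx_point (v : 'rV[F]_3) : v != 0 -> is_point <<v>>%MS.
Proof.
by move=> nz_v; rewrite /is_point /is_subspace genmx_id eqxx genmxE rank_rV nz_v.
Qed.

Lemma kermx_line (c : 'rV[F]_3) : c != 0 -> is_line <<kermx c^T>>%MS.
Proof.
move=> nz_c; rewrite /is_line /is_subspace genmx_id eqxx genmxE.
by rewrite mxrank_ker mxrank_tr rank_rV nz_c.
Qed.

Lemma arc_le_m_r n r (B : {set 'M[F]_3}) : is_arc n r B -> (n <= m_r F r)%N.
Proof.
move=> arcB; have /and4P [_ /eqP cardB _ _] := arcB.
by rewrite -cardB; apply: leq_bigmax_cond; rewrite cardB.
Qed.

Section ArcOfVectors.
Variables (vs : seq 'rV[F]_3) (r : nat).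
Hypotheses (vs_normalized : all normalized vs) (vs_uniq : uniq vs).

Let B := [set <<v>>%MS | v in vs].

Let genmx_inj : {in vs &, injective (fun v : 'rV[F]_3 => <<v>>%MS)}.
Proof.
move=> u v /(allP vs_normalized) nu /(allP vs_normalized) nv /= uv.
by apply: normalized_sub_eq => //; rewrite -genmxE uv genmxE.
Qed.

Lemma card_genmx_set : #|B| = size vs.
Proof. by rewrite card_in_imset //; apply/card_uniqP. Qed.

Lemma on_line_genmx_set L : on_line B L = count (fun v => v <= L)%MS vs.
Proof.
rewrite /on_line.
have -> : [set P in B | (P <= L)%MS] = [set <<v>>%MS | v in [seq v <- vs | v <= L]%MS].
  apply/setP => P; rewrite inE; apply/andP/imsetP => [[/imsetP [v vs_v ->]] | [v]].
    by rewrite genmxE => vL; exists v; rewrite // mem_filter vL.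
  by rewrite mem_filter => /andP [vL vs_v] ->; rewrite genmxE imset_f.
rewrite card_in_imset; last first.
  by move=> u v; rewrite !mem_filter => /andP [_ ?] /andP [_ ?]; apply: genmx_inj.
by rewrite (card_uniqP _) ?size_filter ?filter_uniq.
Qed.

Lemma is_arc_normalized (c0 : 'rV[F]_3) :
  (forall c : 'rV_3, normalized c -> (count (fun v => v *m c^T == 0)%R vs <= r)%N) ->
  c0 != 0 -> count (fun v => v *m c0^T == 0) vs = r ->
  is_arc (size vs) r B.
Proof.
move=> bounded nz_c0 count_c0; apply/and4P; split.
- apply/forall_inP => _ /imsetP [v vs_v ->].
  exact/genmx_point/normalized_neq0/(allP vs_normalized).
- by rewrite card_genmx_set.
- apply/forallP => L; apply/implyP => /andP [_ /eqP rkL].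
  have [|c nz_c Lc] := @sub_kernel_form _ _ _ L; first by rewrite rkL.
  have [a nz_a na] := normalize_scale nz_c.
  rewrite on_line_genmx_set; apply: leq_trans (bounded _ na).
  apply: sub_count => v /Lc vc0.
  by rewrite linearZ /= -scalemxAr vc0 scaler0.
- apply/existsP; exists <<kermx c0^T>>%MS; rewrite kermx_line //=.
  rewrite on_line_genmx_set -count_c0; apply/eqP/eq_count => v.
  by rewrite genmxE sub_kermx.
Qed.

End ArcOfVectors.
End Arcs.

Section Row3.
Local Open Scope ring_scope.

Lemma ord3_cases (i : 'I_3) : [\/ i = 0, i = 1 | i = 2].
Proof.
by case: i => -[|[|[|//]]] i3; [apply: Or31 | apply: Or32 | apply: Or33]; apply: val_inj.
Qed.

Lemma row3P (R : Type) (u v : 'rV[R]_3) :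
  u 0 0 = v 0 0 -> u 0 1 = v 0 1 -> u 0 2 = v 0 2 -> u = v.
Proof. by move=> e0 e1 e2; apply/rowP => i; case: (ord3_cases i) => ->. Qed.

End Row3.

(* -3 = 2 is not a square modulo 5 *)
Lemma dvd5_sqrD3sqr a b : 5 %| a ^ 2 + 3 * b ^ 2 -> (5 %| a) && (5 %| b).
Proof.
rewrite /dvdn -modnDm -modnMmr -(modnXm 2 5 a) -(modnXm 2 5 b).
have : a %% 5 < 5 by rewrite ltn_mod.
have : b %% 5 < 5 by rewrite ltn_mod.
move: (a %% 5) (b %% 5) => x y.
by do 5?[case: x => [|x]] => //; do 5?[case: y => [|y]].
Qed.

Definition code3 := (nat * nat * nat)%type.

Definition code_coord (u : code3) (k : nat) : nat :=
  match k with 0 => u.1.1 | 1 => u.1.2 | _ => u.2 end.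

Definition pair_add (p q : nat * nat) : nat * nat := (p.1 + q.1, p.2 + q.2).

(* (a + b w) (c + d w) = (a c + 2 b d) + (a d + b c) w, left unreduced *)
Definition code_mul (e1 e2 : nat) : nat * nat :=
  (e1 %% 5 * (e2 %% 5) + 2 * (e1 %/ 5 * (e2 %/ 5)),
   e1 %% 5 * (e2 %/ 5) + e1 %/ 5 * (e2 %% 5)).

Definition code_dot (u v : code3) : nat * nat :=
  let m k := code_mul (code_coord u k) (code_coord v k) in
  pair_add (pair_add (m 0) (m 1)) (m 2).

Definition code_orth (u v : code3) : bool :=
  let p := code_dot u v in (5 %| p.1) && (5 %| p.2).

Definition normal_codes : seq code3 :=
  [seq (1, x, y) | x <- iota 0 25, y <- iota 0 25] ++
  [seq (0, 1, y) | y <- iota 0 25] ++ [:: (0, 0, 1)].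

Definition lines_bounded (s : seq code3) (r : nat) : bool :=
  all (fun c => count (code_orth^~ c) s <= r) normal_codes.

Lemma normal_code_small u : u \in normal_codes ->
  [&& code_coord u 0 < 25, code_coord u 1 < 25 & code_coord u 2 < 25].
Proof.
rewrite mem_cat => /orP [/allpairsP [[x y] [x25 y25 ->]] | ].
  by move: x25 y25; rewrite !mem_iota /= => -> ->.
rewrite mem_cat => /orP [/mapP [y y25 ->] | ].
  by move: y25; rewrite mem_iota /= => ->.
by rewrite mem_seq1 => /eqP ->.
Qed.

Section GF25.
Local Open Scope ring_scope.
Variable F : finFieldType.
Hypothesis cardF : #|F| = 25%N.

Lemma GF25_char : 5%N \in [pchar F].
Proof. exact: (@card_finPcharP _ 5 2). Qed.

Lemma natr_eq0_GF25 n : (n%:R == 0 :> F) = (5 %| n)%N.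
Proof. by rewrite (dvdn_pcharf GF25_char). Qed.

Lemma GF25_five : 5%:R = 0 :> F.
Proof. by apply/eqP; rewrite natr_eq0_GF25. Qed.

Lemma natr_mod5 n : (n %% 5)%:R = n%:R :> F.
Proof. by rewrite {2}(divn_eq n 5) natrD natrM GF25_five mulr0 add0r. Qed.

Lemma GF25_not_prime_field : exists z : F, z ^+ 5 != z.
Proof.
have [z Hz|fixed] := pickP (fun z : F => z ^+ 5 != z); first by exists z.
have nz_p : ('X^5 - 'X : {poly F}) != 0.
  by rewrite -size_poly_eq0 size_polyDl ?size_polyXn // size_polyN size_polyX.
have roots : all (root ('X^5 - 'X)) (enum F).
  by apply/allP => x _; rewrite /root !hornerE subr_eq0; apply/negbFE/fixed.
have := max_poly_roots nz_p roots (enum_uniq F).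
by rewrite size_polyDl ?size_polyXn ?size_polyN ?size_polyX // -cardE cardF.
Qed.

(* t = z^5 - z is nonzero with t^5 = -t, so t^4 = -1 and t^2 = 2 or t^2 = -2;
   in the latter case (2t)^2 = -8 = 2. *)
Lemma GF25_sqrt2 : exists w : F, w ^+ 2 = 2%:R.
Proof.
have [z z5] := GF25_not_prime_field.
set t := z ^+ 5 - z.
have nz_t : t != 0 by rewrite subr_eq0.
have t5 : t ^+ 5 = - t.
  rewrite -(pFrobenius_autE GF25_char) rmorphB /= !pFrobenius_autE -exprM.
  by rewrite (_ : (5 * 5)%N = #|F|) ?expf_card ?cardF // opprB.
have t4 : t ^+ 4 = -1 by apply: (mulfI nz_t); rewrite -exprS t5 mulrN1.
have : (t ^+ 2 - 2%:R) * (t ^+ 2 + 2%:R) = 0.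
  have -> : (t ^+ 2 - 2%:R) * (t ^+ 2 + 2%:R) = t ^+ 4 + 1 - 5%:R :> F by ring.
  by rewrite t4 addNr GF25_five subr0.
move/eqP; rewrite mulf_eq0 subr_eq0 addr_eq0 => /orP [/eqP t2 | /eqP t2].
  by exists t.
exists (2%:R * t); rewrite exprMn t2.
have -> : 2%:R ^+ 2 * - 2%:R = 2%:R - 2%:R * 5%:R :> F by ring.
by rewrite GF25_five mulr0 subr0.
Qed.

Variable w : F.
Hypothesis w2 : w ^+ 2 = 2%:R.

Definition pair_val (p : nat * nat) : F := p.1%:R + p.2%:R * w.
Definition decode (e : nat) : F := pair_val (e %% 5, e %/ 5)%N.
Definition decode_row (u : code3) : 'rV[F]_3 :=
  \row_(k < 3) decode (code_coord u k).

Lemma decode0 : decode 0 = 0.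
Proof. by rewrite /decode /pair_val /= mul0r addr0. Qed.

Lemma decode1 : decode 1 = 1.
Proof. by rewrite /decode /pair_val /= mul0r addr0. Qed.

Lemma pair_valD p q : pair_val (pair_add p q) = pair_val p + pair_val q.
Proof. by rewrite /pair_val /= !natrD; ring. Qed.

Lemma decodeM e1 e2 : decode e1 * decode e2 = pair_val (code_mul e1 e2).
Proof. by rewrite /decode /pair_val /= !natrD !natrM; ring: w2. Qed.

Lemma pair_val_eq0 p : (pair_val p == 0) = (5 %| p.1)%N && (5 %| p.2)%N.
Proof.
case: p => a b; rewrite /pair_val /=; apply/eqP/andP => [ab0 | [a5 b5]].
  apply/andP/dvd5_sqrD3sqr; rewrite -natr_eq0_GF25 natrD natrM !natrX.
  have -> : a%:R = - (b%:R * w) :> F by apply/eqP; rewrite -addr_eq0 ab0.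
  have -> : (- (b%:R * w)) ^+ 2 + 3%:R * b%:R ^+ 2 = b%:R ^+ 2 * (w ^+ 2 + 3%:R) :> F.
    by ring.
  by rewrite w2 -natrD GF25_five mulr0.
by rewrite -(natr_mod5 a) -(natr_mod5 b) (eqP a5) (eqP b5) mul0r addr0.
Qed.

Lemma decode_inj e1 e2 :
  (e1 < 25)%N -> (e2 < 25)%N -> decode e1 = decode e2 -> e1 = e2.
Proof.
move=> lt1 lt2 /eqP; rewrite -subr_eq0.
have -> : decode e1 - decode e2 =
    pair_val (e1 %% 5 + 4 * (e2 %% 5), e1 %/ 5 + 4 * (e2 %/ 5))%N - 5%:R * decode e2.
  by rewrite /decode /pair_val /= !natrD; ring.
by rewrite GF25_five mul0r subr0 pair_val_eq0 /= => /andP [ha hb]; lia.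
Qed.

Lemma decode_onto x : exists2 e, (e < 25)%N & decode e = x.
Proof.
pose d (i : 'I_25) := decode i.
have d_inj : injective d by move=> i j /decode_inj eq_ij; apply/val_inj/eq_ij.
have card_le : (#|F| <= #|'I_25|)%N by rewrite card_ord cardF.
have /codomP [i ->] := inj_card_onto d_inj card_le x.
by exists i.
Qed.

Lemma decode_row_dot u v :
  (decode_row u *m (decode_row v)^T) 0 0 = pair_val (code_dot u v).
Proof.
rewrite !mxE !big_ord_recl big_ord0 addr0 !mxE /= !decodeM.
by rewrite /code_dot !pair_valD addrA.
Qed.

Lemma decode_row_orth u v : (decode_row u *m (decode_row v)^T == 0) = code_orth u v.
Proof.
rewrite /code_orth -pair_val_eq0 -decode_row_dot.
apply/eqP/eqP => [-> | uv0]; first by rewrite mxE.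
by apply/rowP => i; rewrite ord1 uv0 mxE.
Qed.

Lemma decode_row_inj : {in normal_codes &, injective decode_row}.
Proof.
move=> u v /normal_code_small /and3P [u0 u1 u2] /normal_code_small /and3P [v0 v1 v2].
move=> /rowP uv; have := uv 0; have := uv 1; have := uv 2; rewrite !mxE /=.
move=> /(decode_inj u2 v2) e2 /(decode_inj u1 v1) e1 /(decode_inj u0 v0) e0.
case: u e0 e1 e2 {uv u0 u1 u2} => [[? ?] ?] e0 e1 e2.
by case: v {v0 v1 v2} e0 e1 e2 => [[? ?] ?] /= -> -> ->.
Qed.

Lemma normalized_decode_row u : u \in normal_codes -> normalized (decode_row u).
Proof.
rewrite mem_cat => /orP [/allpairsP [[x y] [_ _ ->]] | ].
  apply/existsP; exists 0; rewrite mxE decode1 eqxx.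
  by apply/forallP => -[[|[|[|//]]] ?].
rewrite mem_cat => /orP [/mapP [y _ ->] | ].
  apply/existsP; exists 1; rewrite mxE decode1 eqxx.
  by apply/forallP => -[[|[|[|//]]] ?] //=; rewrite mxE decode0.
rewrite mem_seq1 => /eqP ->; apply/existsP; exists 2; rewrite mxE decode1 eqxx.
by apply/forallP => -[[|[|[|//]]] ?] //=; rewrite mxE decode0.
Qed.

Lemma normalized_eq_decode_row c : normalized c ->
  exists2 u, u \in normal_codes & c = decode_row u.
Proof.
case/existsP => k /andP [/eqP ck /forallP c0].
have c00 : (0 < k)%N -> c 0 0 = 0 by move=> ?; apply/eqP/(implyP (c0 0)).
have c01 : (1 < k)%N -> c 0 1 = 0 by move=> ?; apply/eqP/(implyP (c0 1)).
case: (ord3_cases k) => def_k; rewrite {k c0}def_k in ck c00 c01.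
- have [x x25 /esym ex] := decode_onto (c 0 1).
  have [y y25 /esym ey] := decode_onto (c 0 2).
  exists (1, x, y)%N; first by rewrite mem_cat allpairs_f ?mem_iota.
  by apply: row3P; rewrite !mxE /= ?decode1.
- have [y y25 /esym ey] := decode_onto (c 0 2).
  exists (0, 1, y)%N; first by rewrite !mem_cat map_f ?mem_iota ?orbT.
  by apply: row3P; rewrite !mxE /= ?decode0 ?decode1 ?c00.
- exists (0, 0, 1)%N; first by rewrite !mem_cat mem_seq1 eqxx !orbT.
  by apply: row3P; rewrite !mxE /= ?decode0 ?decode1 ?c00 ?c01.
Qed.

Lemma is_arc_codes (s : seq code3) r c0 :
  all (mem normal_codes) s -> uniq s -> lines_bounded s r ->
  c0 \in normal_codes -> count (code_orth^~ c0) s = r ->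
  is_arc (size s) r [set <<v>>%MS | v in map decode_row s].
Proof.
move=> /allP s_normal s_uniq s_bounded c0_normal count_c0.
have count_decode u : count (fun v => v *m (decode_row u)^T == 0) (map decode_row s)
    = count (code_orth^~ u) s.
  by rewrite count_map; apply: eq_count => v; exact: decode_row_orth.
rewrite -(size_map decode_row); apply: (is_arc_normalized _ _ (c0 := decode_row c0)).
- by rewrite all_map; apply/allP => u /s_normal; exact: normalized_decode_row.
- by rewrite (map_inj_in_uniq (sub_in2 s_normal decode_row_inj)).
- move=> c /normalized_eq_decode_row [u u_normal ->]; rewrite count_decode.
  exact: (allP s_bounded).
- exact/normalized_neq0/normalized_decode_row.
- by rewrite count_decode.
Qed.

End GF25.

Definition arc418 : seq code3 := [::
  (1,0,1); (1,0,3); (1,0,5); (1,0,7); (1,0,8); (1,0,10); (1,0,11); (1,0,12);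
  (1,0,14); (1,0,15); (1,0,16); (1,0,19); (1,0,20); (1,0,22); (1,0,23); (1,0,24);
  (1,1,1); (1,1,4); (1,1,6); (1,1,8); (1,1,9); (1,1,10); (1,1,11); (1,1,12);
  (1,1,13); (1,1,15); (1,1,16); (1,1,17); (1,1,20); (1,1,21); (1,1,23); (1,1,24);
  (1,2,3); (1,2,6); (1,2,7); (1,2,8); (1,2,9); (1,2,10); (1,2,11); (1,2,13);
  (1,2,14); (1,2,15); (1,2,16); (1,2,18); (1,2,19); (1,2,21); (1,2,22); (1,2,23);
  (1,2,24); (1,3,2); (1,3,4); (1,3,6); (1,3,7); (1,3,8); (1,3,9); (1,3,10);
  (1,3,13); (1,3,14); (1,3,15); (1,3,16); (1,3,18); (1,3,19); (1,3,21); (1,3,22);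
  (1,3,24); (1,4,2); (1,4,4); (1,4,5); (1,4,6); (1,4,8); (1,4,9); (1,4,10);
  (1,4,11); (1,4,12); (1,4,15); (1,4,16); (1,4,17); (1,4,18); (1,4,21); (1,4,23);
  (1,4,24); (1,5,1); (1,5,5); (1,5,7); (1,5,9); (1,5,11); (1,5,12); (1,5,13);
  (1,5,16); (1,5,17); (1,5,18); (1,5,20); (1,5,21); (1,5,22); (1,5,24); (1,6,2);
  (1,6,3); (1,6,4); (1,6,5); (1,6,6); (1,6,7); (1,6,8); (1,6,11); (1,6,13);
  (1,6,14); (1,6,15); (1,6,16); (1,6,18); (1,6,20); (1,6,22); (1,6,23); (1,6,24);
  (1,7,1); (1,7,3); (1,7,4); (1,7,5); (1,7,6); (1,7,7); (1,7,10); (1,7,11);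
  (1,7,12); (1,7,16); (1,7,18); (1,7,19); (1,7,22); (1,8,1); (1,8,3); (1,8,4);
  (1,8,6); (1,8,7); (1,8,9); (1,8,10); (1,8,11); (1,8,13); (1,8,14); (1,8,15);
  (1,8,16); (1,8,17); (1,8,20); (1,8,21); (1,8,22); (1,8,23); (1,9,2); (1,9,3);
  (1,9,4); (1,9,7); (1,9,8); (1,9,9); (1,9,10); (1,9,11); (1,9,13); (1,9,17);
  (1,9,20); (1,9,21); (1,9,22); (1,9,23); (1,10,2); (1,10,3); (1,10,5); (1,10,6);
  (1,10,8); (1,10,11); (1,10,12); (1,10,13); (1,10,14); (1,10,16); (1,10,17); (1,10,18);
  (1,10,19); (1,10,20); (1,10,21); (1,10,23); (1,10,24); (1,11,1); (1,11,2); (1,11,4);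
  (1,11,5); (1,11,8); (1,11,9); (1,11,10); (1,11,12); (1,11,13); (1,11,14); (1,11,15);
  (1,11,16); (1,11,17); (1,11,19); (1,11,20); (1,11,21); (1,11,24); (1,12,1); (1,12,2);
  (1,12,3); (1,12,6); (1,12,7); (1,12,8); (1,12,10); (1,12,12); (1,12,13); (1,12,14);
  (1,12,16); (1,12,18); (1,12,19); (1,12,20); (1,12,22); (1,12,23); (1,12,24); (1,13,1);
  (1,13,2); (1,13,3); (1,13,5); (1,13,7); (1,13,9); (1,13,12); (1,13,13); (1,13,14);
  (1,13,15); (1,13,17); (1,13,18); (1,13,19); (1,13,20); (1,13,21); (1,13,22); (1,13,23);
  (1,14,1); (1,14,2); (1,14,4); (1,14,8); (1,14,9); (1,14,10); (1,14,11); (1,14,12);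
  (1,14,14); (1,14,15); (1,14,17); (1,14,18); (1,14,19); (1,14,20); (1,14,22); (1,14,23);
  (1,14,24); (1,15,1); (1,15,5); (1,15,6); (1,15,7); (1,15,8); (1,15,9); (1,15,10);
  (1,15,11); (1,15,12); (1,15,13); (1,15,14); (1,15,15); (1,15,17); (1,15,18); (1,15,19);
  (1,15,20); (1,15,21); (1,15,23); (1,16,1); (1,16,2); (1,16,3); (1,16,4); (1,16,6);
  (1,16,10); (1,16,11); (1,16,12); (1,16,14); (1,16,15); (1,16,17); (1,16,18); (1,16,19);
  (1,16,20); (1,16,21); (1,16,23); (1,16,24); (1,17,1); (1,17,2); (1,17,3); (1,17,4);
  (1,17,5); (1,17,6); (1,17,7); (1,17,8); (1,17,9); (1,17,15); (1,17,16); (1,17,17);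
  (1,17,18); (1,17,19); (1,17,21); (1,17,22); (1,17,23); (1,17,24); (1,18,1); (1,18,2);
  (1,18,3); (1,18,4); (1,18,5); (1,18,6); (1,18,7); (1,18,8); (1,18,10); (1,18,12);
  (1,18,13); (1,18,14); (1,18,19); (1,18,20); (1,18,21); (1,18,22); (1,18,24); (1,19,1);
  (1,19,2); (1,19,4); (1,19,5); (1,19,6); (1,19,8); (1,19,9); (1,19,10); (1,19,11);
  (1,19,12); (1,19,13); (1,19,14); (1,19,15); (1,19,16); (1,19,17); (1,19,18); (1,19,19);
  (1,19,22); (1,20,1); (1,20,2); (1,20,3); (1,20,4); (1,20,5); (1,20,7); (1,20,8);
  (1,20,9); (1,20,11); (1,20,12); (1,20,13); (1,20,16); (1,20,17); (1,20,18); (1,20,20);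
  (1,20,22); (1,20,23); (1,20,24); (1,21,1); (1,21,2); (1,21,3); (1,21,4); (1,21,6);
  (1,21,7); (1,21,8); (1,21,9); (1,21,10); (1,21,11); (1,21,13); (1,21,15); (1,21,17);
  (1,21,18); (1,21,19); (1,21,20); (1,21,21); (1,21,23); (1,22,1); (1,22,2); (1,22,3);
  (1,22,4); (1,22,5); (1,22,11); (1,22,12); (1,22,13); (1,22,14); (1,22,15); (1,22,16);
  (1,22,17); (1,22,19); (1,22,20); (1,22,21); (1,22,22); (1,22,24); (1,23,1); (1,23,3);
  (1,23,4); (1,23,5); (1,23,6); (1,23,7); (1,23,9); (1,23,10); (1,23,11); (1,23,12);
  (1,23,14); (1,23,16); (1,23,18); (1,23,19); (1,23,20); (1,23,21); (1,23,22); (1,23,23);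
  (1,24,2); (1,24,3); (1,24,4); (1,24,5); (1,24,6); (1,24,8); (1,24,9); (1,24,10);
  (1,24,12); (1,24,13); (1,24,14); (1,24,15); (1,24,16); (1,24,18); (1,24,19); (1,24,22);
  (1,24,23); (1,24,24)].

Lemma arc418_size : size arc418 = 418.
Proof. by vm_compute. Qed.

Lemma arc418_normal : all (mem normal_codes) arc418.
Proof. by vm_compute. Qed.

Lemma arc418_uniq : uniq arc418.
Proof. by vm_compute. Qed.

Lemma arc418_lines_bounded : lines_bounded arc418 18.
Proof. by vm_compute. Qed.

Lemma arc418_full_line :
  (1, 0, 1) \in normal_codes /\ count (code_orth^~ (1, 0, 1)) arc418 = 18.
Proof. by vm_compute. Qed.

Theorem mainTheorem12 (F : finFieldType) (hF : #|F| = 25) :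
  (exists B : {set 'M[F]_3}, is_arc 418 18 B) /\ (418 <= m_r F 18)%N.
Proof.
have [w w2] := GF25_sqrt2 hF.
have [c0_normal count_c0] := arc418_full_line.
have := is_arc_codes hF w2 arc418_normal arc418_uniq arc418_lines_bounded
  c0_normal count_c0.
rewrite arc418_size => arcB.
by split; [eexists; exact: arcB | exact: arc_le_m_r arcB].
Qed.
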